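(* If $(\mathbb{X},\omega)$ is a $\mathcal{D}$-coalgebra, then $\mathbb{X}$ is a Cartesian differential category with differential combinator $\mathsf{D}^\omega[f]:=\omega(f)_1$.
   Context: Composition in diagrammatic order. A Cartesian left additive category: finite products, hom-sets commutative monoids with $f(g+h)=fg+fh$, $f0=0$, projections additive. A Cartesian differential category: a Cartesian left additive category with a combinator $f:A\to B\mapsto\mathsf{D}[f]:A\times A\to B$ satisfying [CD.1] $\mathsf{D}[f+g]=\mathsf{D}[f]+\mathsf{D}[g]$, $\mathsf{D}[0]=0$; [CD.2] $(1\times(\pi_0+\pi_1))\mathsf{D}[f]=(1\times\pi_0)\mathsf{D}[f]+(1\times\pi_1)\mathsf{D}[f]$, $\langle1,0\rangle\mathsf{D}[f]=0$; [CD.3] $\mathsf{D}[1]=\pi_1$, $\mathsf{D}[\pi_j]=\pi_1\pi_j$; [CD.4] $\mathsf{D}[\langle f,g\rangle]=\langle\mathsf{D}[f],\mathsf{D}[g]\rangle$; [CD.5] $\mathsf{D}[fg]=\langle\pi_0f,\mathsf{D}[f]\rangle\mathsf{D}[g]$; [CD.6] $\ell\mathsf{D}^2[f]=\mathsf{D}[f]$, $\ell=\langle1,0\rangle\times\langle0,1\rangle$; [CD.7] $c\mathsf{D}^2[f]=\mathsf{D}^2[f]$, $c=\langle\langle\pi_0\pi_0,\pi_1\pi_0\rangle,\langle\pi_0\pi_1,\pi_1\pi_1\rangle\rangle$ on $(A\times A)\times(A\times A)$. Let $\mathsf{P}(A)=A\times A$, $\mathsf{P}(f)=f\times f$. A pre-$\mathsf{D}$-sequence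 $f_\bullet:A\to B$ is $(f_n)$, $f_n:\mathsf{P}^n(A)\to B$; $(h\cdot f_\bullet)_n=\mathsf{P}^n(h)f_n$; $\mathsf{T}(f_\bullet)_n=\langle\mathsf{P}^n(\pi_0)f_n,f_{n+1}\rangle$; $\mathsf{D}[f_\bullet]_n=f_{n+1}$; identity $i_0=1$, $i_n=\pi_1\cdots\pi_1$ ($n$ times); composition $(f_\bullet\ast g_\bullet)_n=\mathsf{T}^n(f_\bullet)_0g_n$; products: projections $i_\bullet\cdot\pi_j$, pairing pointwise; addition pointwise. A $\mathsf{D}$-sequence: pre-$\mathsf{D}$-sequence with, for all $n$ and $C=\mathsf{P}^n(A)$, $\langle1,0\rangle\cdot\mathsf{D}^{n+1}[f_\bullet]=0_\bullet$, $(1\times(\pi_0+\pi_1))\cdot\mathsf{D}^{n+1}[f_\bullet]=(1\times\pi_0)\cdot\mathsf{D}^{n+1}[f_\bullet]+(1\times\pi_1)\cdot\mathsf{D}^{n+1}[f_\bullet]$, $\ell\cdot\mathsf{D}^{n+2}[f_\bullet]=\mathsf{D}^{n+1}[f_\bullet]$, $c\cdot\mathsf{D}^{n+2}[f_\bullet]=\mathsf{D}^{n+2}[f_\bullet]$ (maps for $C$). $\mathcal{D}[\mathbb{X}]$: the category of $\mathsf{D}$-sequences. $\mathcal{D}[\mathsf{F}](f_\bullet)_n=\mathsf{F}(f_n)$; $\varepsilon(f_\bullet)=f_0$; $\delta(f_\bullet)_0=f_\bullet$, $\delta(f_\bullet)_n=\mathsf{D}^n[f_\bullet]$. A $\mathcal{D}$-coalgebra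 is $(\mathbb{X},\omega)$, $\mathbb{X}$ a Cartesian left additive category, $\omega:\mathbb{X}\to\mathcal{D}[\mathbb{X}]$ a functor preserving finite products strictly and $+,0$, with $\omega\varepsilon=1_{\mathbb{X}}$ and $\omega\delta=\omega\,\mathcal{D}[\omega]$. *)

(* Composition is written in DIAGRAMMATIC order: [comp f g] = "f then g" = fg. *)

Record CLAC := {
  ob : Type;
  hom : ob -> ob -> Type;
  idm : forall A, hom A A;
  comp : forall A B C, hom A B -> hom B C -> hom A C;
  comp_idl : forall A B (f : hom A B), comp _ _ _ (idm A) f = f;
  comp_idr : forall A B (f : hom A B), comp _ _ _ f (idm B) = f;
  comp_assoc : forall A B C D (f : hom A B) (g : hom B C) (h : hom C D),
      comp _ _ _ (comp _ _ _ f g) h = comp _ _ _ f (comp _ _ _ g h);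
  term : ob;
  bang : forall A, hom A term;
  bang_uniq : forall A (f : hom A term), f = bang A;
  prod : ob -> ob -> ob;
  p0 : forall A B, hom (prod A B) A;
  p1 : forall A B, hom (prod A B) B;
  pair : forall C A B, hom C A -> hom C B -> hom C (prod A B);
  pair_p0 : forall C A B (f : hom C A) (g : hom C B), comp _ _ _ (pair _ _ _ f g) (p0 A B) = f;
  pair_p1 : forall C A B (f : hom C A) (g : hom C B), comp _ _ _ (pair _ _ _ f g) (p1 A B) = g;
  pair_uniq : forall C A B (h : hom C (prod A B)),
      h = pair _ _ _ (comp _ _ _ h (p0 A B)) (comp _ _ _ h (p1 A B));
  add : forall A B, hom A B -> hom A B -> hom A B;
  zero : forall A B, hom A B;
  add_assoc : forall A B (f g h : hom A B), add _ _ (add _ _ f g) h = add _ _ f (add _ _ g h);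
  add_comm : forall A B (f g : hom A B), add _ _ f g = add _ _ g f;
  add_zerol : forall A B (f : hom A B), add _ _ (zero A B) f = f;
  comp_addr : forall A B C (f : hom A B) (g h : hom B C),
      comp _ _ _ f (add _ _ g h) = add _ _ (comp _ _ _ f g) (comp _ _ _ f h);
  comp_zeror : forall A B C (f : hom A B), comp _ _ _ f (zero B C) = zero A C;
  p0_add : forall C A B (g h : hom C (prod A B)),
      comp _ _ _ (add _ _ g h) (p0 A B) = add _ _ (comp _ _ _ g (p0 A B)) (comp _ _ _ h (p0 A B));
  p0_zero : forall C A B, comp _ _ _ (zero C (prod A B)) (p0 A B) = zero C A;
  p1_add : forall C A B (g h : hom C (prod A B)),
      comp _ _ _ (add _ _ g h) (p1 A B) = add _ _ (comp _ _ _ g (p1 A B)) (comp _ _ _ h (p1 A B));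
  p1_zero : forall C A B, comp _ _ _ (zero C (prod A B)) (p1 A B) = zero C B
}.

Arguments hom {c} _ _.
Arguments idm {c} A.
Arguments comp {c A B C} _ _.
Arguments term {c}.
Arguments bang {c} A.
Arguments prod {c} _ _.
Arguments p0 {c A B}.
Arguments p1 {c A B}.
Arguments pair {c C A B} _ _.
Arguments add {c A B} _ _.
Arguments zero {c A B}.

Section Defs.
Context {X : CLAC}.

Definition prodm {A B C D : ob X} (f : hom A C) (g : hom B D)
  : hom (prod A B) (prod C D) := pair (comp p0 f) (comp p1 g).

Definition Pob (A : ob X) : ob X := prod A A.

(** P^n(A); we iterate "inside": P^(n+1)(A) = P^n(P(A)) definitionally. *)
Fixpoint Pn (n : nat) (A : ob X) : ob X :=
  match n with O => A | S m => Pn m (Pob A) end.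

Fixpoint Pn_map (n : nat) {A B : ob X} (h : hom A B) {struct n}
  : hom (Pn n A) (Pn n B) :=
  match n with O => h | S m => Pn_map m (prodm h h) end.

Definition preDseq (A B : ob X) : Type := forall n : nat, hom (Pn n A) B.

Definition precomp {A' A B : ob X} (h : hom A' A) (f : preDseq A B)
  : preDseq A' B := fun n => comp (Pn_map n h) (f n).

Definition seqD {A B : ob X} (f : preDseq A B) : preDseq (Pob A) B :=
  fun n => f (S n).

Fixpoint seqDn (n : nat) {A B : ob X} (f : preDseq A B) {struct n}
  : preDseq (Pn n A) B :=
  match n with O => f | S m => seqDn m (seqD f) end.

Definition seqT {A B : ob X} (f : preDseq A B) : preDseq (Pob A) (Pob B) :=
  fun n => pair (comp (Pn_map n p0) (f n)) (f (S n)).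

Fixpoint seqTn (n : nat) {A B : ob X} (f : preDseq A B) {struct n}
  : preDseq (Pn n A) (Pn n B) :=
  match n with O => f | S m => seqTn m (seqT f) end.

Fixpoint iseq (n : nat) (A : ob X) {struct n} : hom (Pn n A) A :=
  match n with O => idm A | S m => comp (iseq m (Pob A)) p1 end.

Definition seq_comp {A B C : ob X} (f : preDseq A B) (g : preDseq B C)
  : preDseq A C := fun n => comp (seqTn n f 0) (g n).

Definition seq_p0 (A B : ob X) : preDseq (prod A B) A :=
  fun n => comp (iseq n (prod A B)) p0.
Definition seq_p1 (A B : ob X) : preDseq (prod A B) B :=
  fun n => comp (iseq n (prod A B)) p1.

Definition inj0 (C : ob X) : hom C (Pob C) := pair (idm C) zero.
Definition ellm (C : ob X) : hom (Pob C) (Pob (Pob C)) :=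
  prodm (pair (idm C) zero) (pair zero (idm C)).
Definition cm (C : ob X) : hom (Pob (Pob C)) (Pob (Pob C)) :=
  pair (pair (comp p0 p0) (comp p1 p0)) (pair (comp p0 p1) (comp p1 p1)).

Definition is_Dseq {A B : ob X} (f : preDseq A B) : Prop :=
  forall n : nat,
    let C := Pn n A in
    let D1 := seqD (seqDn n f) in
    let D2 := seqD (seqD (seqDn n f)) in
    (forall k, precomp (inj0 C) D1 k = zero) /\
    (forall k, precomp (prodm (idm C) (add p0 p1)) D1 k
               = add (precomp (prodm (idm C) p0) D1 k)
                     (precomp (prodm (idm C) p1) D1 k)) /\
    (forall k, precomp (ellm C) D2 k = D1 k) /\
    (forall k, precomp (cm C) D2 k = D2 k).

End Defs.

(** * D-coalgebras.
    ω : X -> D[X] is identity on objects (forced by ωε = 1_X) and sends each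
    map to a D-sequence; equalities of D-sequences are componentwise. *)
Record Dcoalg (X : CLAC) := {
  om : forall (A B : ob X), hom A B -> preDseq A B;
  om_Dseq : forall A B (f : hom A B), is_Dseq (om _ _ f);
  om_id : forall A n, om _ _ (idm A) n = iseq n A;
  om_comp : forall A B C (f : hom A B) (g : hom B C) n,
      om _ _ (comp f g) n = seq_comp (om _ _ f) (om _ _ g) n;
  om_p0 : forall A B n, om _ _ (@p0 X A B) n = seq_p0 A B n;
  om_p1 : forall A B n, om _ _ (@p1 X A B) n = seq_p1 A B n;
  om_add : forall A B (f g : hom A B) n, om _ _ (add f g) n = add (om _ _ f n) (om _ _ g n);
  om_zero : forall A B n, om _ _ (@zero X A B) n = zero;
  om_eps : forall A B (f : hom A B), om _ _ f 0 = f;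
  (* ω δ = ω D[ω] :  δ(ω f)_n = D^n[ω f]  and  D[ω](ω f)_n = ω((ω f)_n) *)
  om_delta : forall A B (f : hom A B) n k, seqDn n (om _ _ f) k = om _ _ (om _ _ f n) k
}.

Arguments om {X} _ {A B} _.

Definition is_CDC (X : CLAC)
  (D : forall A B : ob X, hom A B -> hom (Pob A) B) : Prop :=
  (forall A B (f g : hom A B), D A B (add f g) = add (D A B f) (D A B g)) /\
  (forall A B, D A B zero = zero) /\
  (forall A B (f : hom A B),
      comp (prodm (idm A) (add p0 p1)) (D A B f)
      = add (comp (prodm (idm A) p0) (D A B f)) (comp (prodm (idm A) p1) (D A B f))) /\
  (forall A B (f : hom A B), comp (inj0 A) (D A B f) = zero) /\
  (forall A, D A A (idm A) = p1) /\
  (forall A B, D (prod A B) A p0 = comp p1 p0) /\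
  (forall A B, D (prod A B) B p1 = comp p1 p1) /\
  (forall C A B (f : hom C A) (g : hom C B),
      D C (prod A B) (pair f g) = pair (D C A f) (D C B g)) /\
  (forall A B C (f : hom A B) (g : hom B C),
      D A C (comp f g) = comp (pair (comp p0 f) (D A B f)) (D B C g)) /\
  (forall A B (f : hom A B), comp (ellm A) (D (Pob A) B (D A B f)) = D A B f) /\
  (forall A B (f : hom A B),
      comp (cm A) (D (Pob A) B (D A B f)) = D (Pob A) B (D A B f)).


(* Since ωε = 1, the sequence ω(f) starts with f, and D^ω[f] = ω(f)_1 is its
   next term.  Functoriality of ω read off at level 1 gives the chain rule
   [CD.5]; at the identity and the projections it gives [CD.3], and [CD.4]
   follows from [CD.3], [CD.5] and the universal property of pairing.
   Preservation of + and 0 is [CD.1].  Finally ωδ = ωD[ω] identifies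
   D^ω[D^ω[f]] with ω(f)_2, so [CD.2], [CD.6] and [CD.7] are the D-sequence
   axioms of ω(f) at level 0. *)

Section DSequenceAxioms.

Context {X : CLAC} {A B : ob X} (f : preDseq A B) (Hf : is_Dseq f).

Lemma Dseq_inj0 : comp (inj0 A) (f 1) = zero.
Proof. destruct (Hf 0) as [H _]. exact (H 0). Qed.

Lemma Dseq_additive :
  comp (prodm (idm A) (add p0 p1)) (f 1)
  = add (comp (prodm (idm A) p0) (f 1)) (comp (prodm (idm A) p1) (f 1)).
Proof. destruct (Hf 0) as [_ [H _]]. exact (H 0). Qed.

Lemma Dseq_ellm : comp (ellm A) (f 2) = f 1.
Proof. destruct (Hf 0) as [_ [_ [H _]]]. exact (H 0). Qed.

Lemma Dseq_cm : comp (cm A) (f 2) = f 2.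
Proof. destruct (Hf 0) as [_ [_ [_ H]]]. exact (H 0). Qed.

End DSequenceAxioms.

Section CoalgebraDerivative.

Context {X : CLAC} (w : Dcoalg X).

Definition Dw {A B : ob X} (f : hom A B) : hom (Pob A) B := om w f 1.

Lemma Dw_add (A B : ob X) (f g : hom A B) : Dw (add f g) = add (Dw f) (Dw g).
Proof. exact (om_add X w A B f g 1). Qed.

Lemma Dw_zero (A B : ob X) : Dw (@zero X A B) = zero.
Proof. exact (om_zero X w A B 1). Qed.

Lemma Dw_additive (A B : ob X) (f : hom A B) :
  comp (prodm (idm A) (add p0 p1)) (Dw f)
  = add (comp (prodm (idm A) p0) (Dw f)) (comp (prodm (idm A) p1) (Dw f)).
Proof. apply Dseq_additive, om_Dseq. Qed.

Lemma Dw_inj0 (A B : ob X) (f : hom A B) : comp (inj0 A) (Dw f) = zero.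
Proof. apply Dseq_inj0, om_Dseq. Qed.

Lemma Dw_idm (A : ob X) : Dw (idm A) = p1.
Proof. unfold Dw. rewrite om_id. apply comp_idl. Qed.

Lemma Dw_p0 (A B : ob X) : Dw (@p0 X A B) = comp p1 p0.
Proof. unfold Dw. rewrite om_p0. unfold seq_p0. simpl. now rewrite comp_idl. Qed.

Lemma Dw_p1 (A B : ob X) : Dw (@p1 X A B) = comp p1 p1.
Proof. unfold Dw. rewrite om_p1. unfold seq_p1. simpl. now rewrite comp_idl. Qed.

Lemma Dw_comp (A B C : ob X) (f : hom A B) (g : hom B C) :
  Dw (comp f g) = comp (pair (comp p0 f) (Dw f)) (Dw g).
Proof.
  unfold Dw. rewrite om_comp. unfold seq_comp. simpl. unfold seqT. simpl.
  now rewrite om_eps.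
Qed.

Lemma Dw_comp_p0 (C A B : ob X) (h : hom C (prod A B)) :
  Dw (comp h p0) = comp (Dw h) p0.
Proof. rewrite Dw_comp, Dw_p0, <- comp_assoc. now rewrite pair_p1. Qed.

Lemma Dw_comp_p1 (C A B : ob X) (h : hom C (prod A B)) :
  Dw (comp h p1) = comp (Dw h) p1.
Proof. rewrite Dw_comp, Dw_p1, <- comp_assoc. now rewrite pair_p1. Qed.

Lemma Dw_pair (C A B : ob X) (f : hom C A) (g : hom C B) :
  Dw (pair f g) = pair (Dw f) (Dw g).
Proof.
  rewrite (pair_uniq X _ _ _ (Dw (pair f g))).
  now rewrite <- Dw_comp_p0, <- Dw_comp_p1, pair_p0, pair_p1.
Qed.

Lemma Dw_Dw (A B : ob X) (f : hom A B) : Dw (Dw f) = om w f 2.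
Proof. symmetry. exact (om_delta X w A B f 1 1). Qed.

Lemma Dw_ellm (A B : ob X) (f : hom A B) : comp (ellm A) (Dw (Dw f)) = Dw f.
Proof. rewrite Dw_Dw. apply Dseq_ellm, om_Dseq. Qed.

Lemma Dw_cm (A B : ob X) (f : hom A B) : comp (cm A) (Dw (Dw f)) = Dw (Dw f).
Proof. rewrite Dw_Dw. apply Dseq_cm, om_Dseq. Qed.

End CoalgebraDerivative.

Theorem proposition4p19 (X : CLAC) (w : Dcoalg X) :
  is_CDC X (fun (A B : ob X) (f : hom A B) => om w f 1).
Proof.
  repeat split.
  - exact (Dw_add w).
  - exact (Dw_zero w).
  - exact (Dw_additive w).
  - exact (Dw_inj0 w).
  - exact (Dw_idm w).
  - exact (Dw_p0 w).
  - exact (Dw_p1 w).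
  - exact (Dw_pair w).
  - exact (Dw_comp w).
  - exact (Dw_ellm w).
  - exact (Dw_cm w).
Qed.
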